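(* The probability that the greedy random walk on $\mathbb{Z}^2$ with rule $\mathcal{R}_{\mathrm{RAND}}$, started at the origin, returns to the origin at least once equals the probability that the particle in the planar mirror model, started at the origin with a uniformly random initial direction, returns to the origin.
   Context: A greedy random walk (GRW) on a connected locally finite graph $G=(V,E)$ started at $v_0$: $X_0=v_0$; with $H_t=\{\{X_{s-1},X_s\}:0<s\le t\}$ and $J_t(v)=\{e\in E: v\in e, e\notin H_t\}$, if $J_t(X_t)\ne\emptyset$ then $X_{t+1}$ is chosen by the rule $\mathcal{R}_{\mathrm{RAND}}$: uniformly at random among the endpoints (other than $X_t$) of the edges in $J_t(X_t)$; if $J_t(X_t)=\emptyset$ then $X_{t+1}$ is a uniformly random neighbor of $X_t$. Planar mirror model: independently at each vertex of $\mathbb{Z}^2$, place a two-sided mirror along one of the two diagonal directions (each with probability $1/3$), or no mirror (probability $1/3$). A particle moves along the edges of $\mathbb{Z}^2$ one unit per step; at a vertex with no mirror it continues straight, and at a vertex with a mirror it is deflected by the law of reflection (turning left or right by $90^\circ$ according to the mirror's orientation). *)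

(* No measure theory is available, so the
   probability of "returns to the origin at least once" is expressed as the
   limit of the (finitely computable) probabilities of "returns to the origin
   at some time 1 <= t <= n", n -> infinity (continuity from below of the
   probability measure along the increasing events). *)
From Stdlib Require Import Reals ZArith List Bool.
Import ListNotations.
Open Scope R_scope.

Definition pt := (Z * Z)%type.
Definition origin : pt := (0%Z, 0%Z).
Definition pt_eqb (p q : pt) : bool := (Z.eqb (fst p) (fst q) && Z.eqb (snd p) (snd q))%bool.

Definition nbrs (x : pt) : list pt :=
  [ ((fst x + 1)%Z, snd x); ((fst x - 1)%Z, snd x);
    (fst x, (snd x + 1)%Z); (fst x, (snd x - 1)%Z) ].

Definition avg (l : list R) : R := fold_right Rplus 0 l / INR (length l).

(* history H_t: list of traversed edges, stored as ordered pairs but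
   compared as unordered edges *)
Definition edge_used (H : list (pt * pt)) (x y : pt) : bool :=
  existsb (fun e => (pt_eqb (fst e) x && pt_eqb (snd e) y)
                    || (pt_eqb (fst e) y && pt_eqb (snd e) x))%bool H.

(* In Z^2 distinct edges at x have distinct other endpoints, so uniform over
   this list is the rule R_RAND. *)
Definition grw_cands (H : list (pt * pt)) (x : pt) : list pt :=
  match filter (fun y => negb (edge_used H x y)) (nbrs x) with
  | [] => nbrs x
  | u => u
  end.

Fixpoint grw_ret (n : nat) (x : pt) (H : list (pt * pt)) : R :=
  match n with
  | O => 0
  | S k => avg (map (fun y => if pt_eqb y origin then 1
                             else grw_ret k y ((x, y) :: H))
                    (grw_cands H x))
  end.

Definition grw_return_by (n : nat) : R := grw_ret n origin [].

Inductive mirror := NoMirror | Slash | Backslash.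

(* new direction after arriving at a vertex with the given mirror
   (law of reflection for mirrors along the diagonals y = x and y = -x) *)
Definition reflect (m : mirror) (d : pt) : pt :=
  match m with
  | NoMirror => d
  | Slash => (snd d, fst d)
  | Backslash => ((- snd d)%Z, (- fst d)%Z)
  end.

Definition directions : list pt := nbrs origin.

Fixpoint mirror_returns (w : pt -> mirror) (n : nat) (p d : pt) : bool :=
  match n with
  | O => false
  | S k => let p' := ((fst p + fst d)%Z, (snd p + snd d)%Z) in
           (pt_eqb p' origin || mirror_returns w k p' (reflect (w p') d))%bool
  end.

Definition upd (w : pt -> mirror) (v : pt) (m : mirror) : pt -> mirror :=
  fun q => if pt_eqb q v then m else w q.

(* expectation of F over i.i.d. uniform mirrors (each of the 3 states w.p. 1/3)
   at the vertices of L (L without duplicates); other vertices: NoMirror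
   (irrelevant when F only depends on the vertices of L) *)
Fixpoint mirror_exp (L : list pt) (F : (pt -> mirror) -> R) : R :=
  match L with
  | [] => F (fun _ => NoMirror)
  | v :: L' => / 3 * (mirror_exp L' (fun w => F (upd w v NoMirror))
                     + mirror_exp L' (fun w => F (upd w v Slash))
                     + mirror_exp L' (fun w => F (upd w v Backslash)))
  end.

Definition zrange (n : nat) : list Z :=
  map (fun k => (Z.of_nat k - Z.of_nat n)%Z) (seq 0 (2 * n + 1)).

(* the box [-n,n]^2, containing every vertex reachable in n steps *)
Definition box (n : nat) : list pt := list_prod (zrange n) (zrange n).

Definition mirror_return_by (n : nat) : R :=
  avg (map (fun d => mirror_exp (box n)
              (fun w => if mirror_returns w n origin d then 1 else 0))
           directions).

(* Couple the two processes step by step.  As long as the greedy walk has not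
   returned to the origin, every vertex it has left carries an even number of
   traversed edges, matched in pairs by a mirror, while the current vertex
   carries an odd number.  On a first visit the walk enters along one edge
   and picks one of the three others uniformly: this reveals a uniformly
   random mirror.  On a later visit exactly one edge is unused, the mirror
   partner of the edge it arrived along, so the walk is reflected by the
   mirror it revealed before.  Revealing mirrors lazily in the mirror model
   gives the same law, so the two "return by time n" probabilities coincide
   for every n; they increase in n, hence converge to a common limit. *)
From Pilot Require Import Defs.
From Stdlib Require Import Reals Lra Lia ZArith List Bool FunctionalExtensionality.
Import ListNotations.
Open Scope R_scope.

Lemma pt_eqb_spec p q : reflect (p = q) (pt_eqb p q).
Proof.
  destruct p as [a b], q as [c d]; unfold pt_eqb; simpl.
  destruct (Z.eqb_spec a c), (Z.eqb_spec b d); constructor; congruence.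
Qed.

Lemma pt_eqb_refl p : pt_eqb p p = true.
Proof. destruct (pt_eqb_spec p p); congruence. Qed.

Lemma pt_eqb_neq p q : p <> q -> pt_eqb p q = false.
Proof. destruct (pt_eqb_spec p q); congruence. Qed.

Inductive dir := DE | DW | DN | DS.

Definition all_dirs : list dir := [DE; DW; DN; DS].

Definition vec (a : dir) : pt :=
  match a with
  | DE => (1%Z, 0%Z) | DW => ((-1)%Z, 0%Z) | DN => (0%Z, 1%Z) | DS => (0%Z, (-1)%Z)
  end.

Definition opp (a : dir) : dir :=
  match a with DE => DW | DW => DE | DN => DS | DS => DN end.

Definition dir_eqb (a b : dir) : bool :=
  match a, b with
  | DE, DE | DW, DW | DN, DN | DS, DS => true
  | _, _ => false
  end.

Lemma dir_eqb_spec a b : reflect (a = b) (dir_eqb a b).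
Proof. destruct a, b; constructor; congruence. Qed.

Lemma dir_eqb_refl a : dir_eqb a a = true.
Proof. now destruct a. Qed.

Definition deflect (m : mirror) (a : dir) : dir :=
  match m with
  | NoMirror => a
  | Slash => match a with DE => DN | DN => DE | DW => DS | DS => DW end
  | Backslash => match a with DE => DS | DS => DE | DW => DN | DN => DW end
  end.

Lemma reflect_vec m a : Defs.reflect m (vec a) = vec (deflect m a).
Proof. destruct m, a; reflexivity. Qed.

(* The edge at a vertex with mirror [m] through which a particle entering
   along the edge in direction [a] leaves. *)
Definition mirror_partner (m : mirror) (a : dir) : dir := deflect m (opp a).

(* Written as in [mirror_returns], so that the two unfold to the same term. *)
Definition move (p : pt) (a : dir) : pt :=
  ((fst p + fst (vec a))%Z, (snd p + snd (vec a))%Z).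

Ltac solve_move :=
  unfold move, pt_eqb; simpl;
  repeat match goal with |- context [Z.eqb ?u ?v] => destruct (Z.eqb_spec u v) end;
  simpl; first [reflexivity | lia].

Lemma move_eqb x a b : pt_eqb (move x a) (move x b) = dir_eqb a b.
Proof. destruct x, a, b; solve_move. Qed.

Lemma move_back_eqb x e a : pt_eqb x (move (move x e) a) = dir_eqb a (opp e).
Proof. destruct x, e, a; solve_move. Qed.

Lemma move_opp x e : move (move x e) (opp e) = x.
Proof. destruct x, e; unfold move; simpl; f_equal; lia. Qed.

Lemma move_neq x e : move x e <> x.
Proof. destruct x, e; unfold move; simpl; intros E; injection E; lia. Qed.

Lemma nbrs_move x : nbrs x = map (move x) all_dirs.
Proof. destruct x; unfold nbrs, move; simpl; repeat f_equal; lia. Qed.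

Definition mirror_avg (f : mirror -> R) : R := / 3 * (f NoMirror + f Slash + f Backslash).

Lemma mirror_exp_cons v L F :
  mirror_exp (v :: L) F = mirror_avg (fun m => mirror_exp L (fun w => F (upd w v m))).
Proof. reflexivity. Qed.

Lemma mirror_exp_const L c : mirror_exp L (fun _ => c) = c.
Proof. induction L as [|v L IH]; simpl; rewrite ?IH; field. Qed.

Lemma upd_upd w v a m : upd (upd w v a) v m = upd w v m.
Proof. extensionality q; unfold upd; now destruct (pt_eqb q v). Qed.

Lemma upd_comm w u v a m : u <> v -> upd (upd w u a) v m = upd (upd w v m) u a.
Proof.
  intros Huv; extensionality q; unfold upd.
  destruct (pt_eqb_spec q v), (pt_eqb_spec q u); congruence.
Qed.

Lemma mirror_exp_pull L v F : In v L ->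
  mirror_exp L F = mirror_avg (fun m => mirror_exp L (fun w => F (upd w v m))).
Proof.
  revert F; induction L as [|u L IH]; intros F Hin; [destruct Hin|].
  destruct (pt_eqb_spec u v) as [<-|Huv].
  - rewrite mirror_exp_cons; unfold mirror_avg; simpl.
    assert (E : forall a m, (fun w => F (upd (upd w u a) u m)) = (fun w => F (upd w u m)))
      by (intros; extensionality w; now rewrite upd_upd).
    rewrite !E. field.
  - destruct Hin as [|Hin]; [congruence|].
    rewrite !mirror_exp_cons; unfold mirror_avg; cbv beta.
    rewrite (IH (fun w => F (upd w u NoMirror)) Hin), (IH (fun w => F (upd w u Slash)) Hin),
      (IH (fun w => F (upd w u Backslash)) Hin).
    unfold mirror_avg; cbn [mirror_exp].
    assert (E : forall a m, (fun w => F (upd (upd w v m) u a)) = (fun w => F (upd (upd w u a) v m)))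
      by (intros; extensionality w; now rewrite upd_comm).
    rewrite !E. ring.
Qed.

(** * Revealing the mirrors lazily *)

Definition revealed := list (pt * mirror).

Fixpoint mirror_at (rv : revealed) (v : pt) : option mirror :=
  match rv with
  | [] => None
  | (u, m) :: rv' => if pt_eqb v u then Some m else mirror_at rv' v
  end.

Definition override (rv : revealed) (w : pt -> mirror) (q : pt) : mirror :=
  match mirror_at rv q with Some m => m | None => w q end.

(* [lazy_leave k rv p e]: probability that a particle leaving [p] in
   direction [e] hits the origin within [k] steps, when the mirrors of [rv]
   are known and each other mirror is drawn when the particle first meets it. *)
Fixpoint lazy_leave (k : nat) (rv : revealed) (p : pt) (e : dir) : R :=
  match k with
  | O => 0
  | S k' =>
      let y := move p e in
      if pt_eqb y origin then 1 else
      match mirror_at rv y with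
      | Some m => lazy_leave k' rv y (deflect m e)
      | None => mirror_avg (fun m => lazy_leave k' ((y, m) :: rv) y (deflect m e))
      end
  end.

(* The particle has just arrived at [x] moving in direction [d]. *)
Definition lazy_at (k : nat) (rv : revealed) (x : pt) (d : dir) : R :=
  match mirror_at rv x with
  | Some m => lazy_leave k rv x (deflect m d)
  | None => mirror_avg (fun m => lazy_leave k ((x, m) :: rv) x (deflect m d))
  end.

Lemma lazy_leave_S k rv p e :
  lazy_leave (S k) rv p e = if pt_eqb (move p e) origin then 1 else lazy_at k rv (move p e) e.
Proof. reflexivity. Qed.

Definition l1_dist (p q : pt) : Z := (Z.abs (fst q - fst p) + Z.abs (snd q - snd p))%Z.

Definition covers (L : list pt) (rv : revealed) (p : pt) (k : nat) : Prop :=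
  forall q, (l1_dist p q <= Z.of_nat k)%Z -> mirror_at rv q = None -> In q L.

Lemma l1_dist_move p q e : (l1_dist p q <= l1_dist (move p e) q + 1)%Z.
Proof. unfold l1_dist, move; destruct e; simpl; lia. Qed.

Lemma override_upd rv w v m : mirror_at rv v = None ->
  override rv (upd w v m) = override ((v, m) :: rv) w.
Proof.
  intros Hv; extensionality q; unfold override, upd; simpl.
  destruct (pt_eqb_spec q v) as [->|]; [now rewrite Hv|].
  now destruct (mirror_at rv q).
Qed.

Lemma mirror_exp_lazy_leave k : forall rv p e L, covers L rv p k ->
  mirror_exp L (fun w => if mirror_returns (override rv w) k p (vec e) then 1 else 0)
  = lazy_leave k rv p e.
Proof.
  induction k as [|k IH]; intros rv p e L Hcov; [exact (mirror_exp_const L 0)|].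
  rewrite lazy_leave_S; unfold lazy_at; cbn [mirror_returns]; fold (move p e).
  set (y := move p e).
  destruct (pt_eqb y origin); cbn [orb]; [exact (mirror_exp_const L 1)|].
  assert (Hcov_y : forall rv', (forall q, mirror_at rv' q = None -> mirror_at rv q = None) ->
    covers L rv' y k).
  { intros rv' Hrv q Hq Hn; apply Hcov; [|auto].
    pose proof (l1_dist_move p q e) as Hd; fold y in Hd; lia. }
  destruct (mirror_at rv y) as [m|] eqn:Hy.
  - rewrite <- (IH rv y (deflect m e) L) by (apply Hcov_y; auto).
    f_equal; extensionality w; unfold override at 2; now rewrite Hy, reflect_vec.
  - assert (Hin : In y L)
      by (apply Hcov; [unfold y, l1_dist, move; destruct e; simpl; lia | exact Hy]).
    rewrite (mirror_exp_pull L y _ Hin); unfold mirror_avg.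
    assert (Hm : forall m, mirror_exp L (fun w =>
        if mirror_returns (override rv (upd w y m)) k y
             (Defs.reflect (override rv (upd w y m) y) (vec e)) then 1 else 0)
      = lazy_leave k ((y, m) :: rv) y (deflect m e)).
    { intros m; rewrite <- (IH ((y, m) :: rv) y (deflect m e) L).
      - f_equal; extensionality w; rewrite (override_upd _ _ _ _ Hy).
        unfold override at 2; simpl; now rewrite pt_eqb_refl, reflect_vec.
      - apply Hcov_y; intros q; simpl; now destruct (pt_eqb q y). }
    now rewrite !Hm.
Qed.

Definition used (H : list (pt * pt)) (v : pt) (a : dir) : bool := edge_used H v (move v a).

Lemma edge_used_cons p q H x y :
  edge_used ((p, q) :: H) x y
  = ((pt_eqb p x && pt_eqb q y) || (pt_eqb p y && pt_eqb q x)) || edge_used H x y.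
Proof. reflexivity. Qed.

Lemma edge_used_sym H x y : edge_used H x y = edge_used H y x.
Proof.
  induction H as [|[p q] H IH]; [reflexivity|].
  rewrite !edge_used_cons, IH; f_equal; apply orb_comm.
Qed.

Lemma used_cons_src H x e a :
  used ((x, move x e) :: H) x a = dir_eqb e a || used H x a.
Proof.
  unfold used; rewrite edge_used_cons, pt_eqb_refl, move_eqb.
  rewrite (pt_eqb_neq x (move x a)) by (intros E; now apply (move_neq x a)).
  now cbn [andb orb]; rewrite orb_false_r.
Qed.

Lemma used_cons_dst H x e a :
  used ((x, move x e) :: H) (move x e) a = dir_eqb a (opp e) || used H (move x e) a.
Proof.
  unfold used; rewrite edge_used_cons, pt_eqb_refl, move_back_eqb.
  rewrite (pt_eqb_neq x (move x e)) by (intros E; now apply (move_neq x e)).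
  now cbn [andb orb]; rewrite andb_true_r.
Qed.

Lemma used_cons_other H x e v a : v <> x -> v <> move x e ->
  used ((x, move x e) :: H) v a = used H v a.
Proof.
  intros Hx Hy; unfold used; rewrite edge_used_cons.
  rewrite (pt_eqb_neq x v), (pt_eqb_neq (move x e) v) by congruence.
  now rewrite andb_false_r.
Qed.

(* The traversed edges at a vertex [v] the walk has left: none if its mirror
   is not revealed, and otherwise a nonempty union of mirror-partner pairs. *)
Definition settled (u : dir -> bool) (om : option mirror) : bool :=
  match om with
  | None => forallb (fun a => negb (u a)) all_dirs
  | Some m => forallb (fun a => Bool.eqb (u a) (u (mirror_partner m a))) all_dirs
              && existsb u all_dirs
  end.

(* The current vertex, entered along the edge [opp d]: apart from that edge
   it looks settled. *)
Definition entered (u : dir -> bool) (om : option mirror) (d : dir) : bool :=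
  u (opp d) && settled (fun a => u a && negb (dir_eqb a (opp d))) om.

Definition dir_table (b1 b2 b3 b4 : bool) (a : dir) : bool :=
  match a with DE => b1 | DW => b2 | DN => b3 | DS => b4 end.

Lemma dir_fun_ind (P : (dir -> bool) -> Prop) :
  (forall b1 b2 b3 b4, P (dir_table b1 b2 b3 b4)) -> forall u, P u.
Proof.
  intros HP u.
  replace u with (dir_table (u DE) (u DW) (u DN) (u DS)) by (extensionality a; now destruct a).
  apply HP.
Qed.

Lemma entered_None u d : entered u None d = true -> forall a, u a = dir_eqb a (opp d).
Proof.
  induction u as [b1 b2 b3 b4] using dir_fun_ind.
  destruct b1, b2, b3, b4, d; try discriminate; intros _ a; now destruct a.
Qed.

Lemma entered_Some u m d :
  entered u (Some m) d = true -> forall a, u a = negb (dir_eqb a (deflect m d)).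
Proof.
  induction u as [b1 b2 b3 b4] using dir_fun_ind.
  destruct b1, b2, b3, b4, m, d; try discriminate; intros _ a; now destruct a.
Qed.

Lemma entered_leave u om m d : entered u om d = true -> om = None \/ om = Some m ->
  u (deflect m d) = false /\ settled (fun a => dir_eqb (deflect m d) a || u a) (Some m) = true.
Proof.
  intros Hent [-> | ->].
  - replace u with (fun a => dir_eqb a (opp d))
      by (extensionality a; symmetry; now apply entered_None).
    destruct m, d; split; reflexivity.
  - replace u with (fun a => negb (dir_eqb a (deflect m d)))
      by (extensionality a; symmetry; now apply entered_Some).
    destruct m, d; split; reflexivity.
Qed.

Lemma entered_arrive u om e : settled u om = true -> u (opp e) = false ->
  entered (fun a => dir_eqb a (opp e) || u a) om e = true.
Proof.
  intros Hset He; unfold entered; rewrite dir_eqb_refl; cbn [orb andb].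
  replace (fun a => (dir_eqb a (opp e) || u a) && negb (dir_eqb a (opp e))) with u; [exact Hset|].
  extensionality a; destruct (dir_eqb_spec a (opp e)) as [->|]; cbn [orb andb negb].
  - now rewrite He.
  - now rewrite andb_true_r.
Qed.

(** * The coupling *)

(* The walk at [x], having arrived moving in direction [d] along the edges [H],
   corresponds to the particle at [x] with the mirrors [rv] revealed. *)
Definition coupled (H : list (pt * pt)) (rv : revealed) (x : pt) (d : dir) : Prop :=
  x <> origin /\ entered (used H x) (mirror_at rv x) d = true /\
  forall v, v <> x -> v <> origin -> settled (used H v) (mirror_at rv v) = true.

Lemma coupled_start a : coupled [(origin, move origin a)] [] (move origin a) a.
Proof.
  split; [apply move_neq|split].
  - replace (used _ (move origin a)) with (fun b => dir_eqb b (opp a) || used [] (move origin a) b)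
      by (extensionality b; symmetry; apply used_cons_dst).
    now apply entered_arrive.
  - intros v Hv Ho; replace (used _ v) with (used [] v)
      by (extensionality b; symmetry; now apply used_cons_other).
    reflexivity.
Qed.

Lemma coupled_step H rv rv' x d m :
  coupled H rv x d ->
  mirror_at rv' x = Some m -> (forall v, v <> x -> mirror_at rv' v = mirror_at rv v) ->
  mirror_at rv x = None \/ mirror_at rv x = Some m ->
  move x (deflect m d) <> origin ->
  coupled ((x, move x (deflect m d)) :: H) rv' (move x (deflect m d)) (deflect m d).
Proof.
  intros (Hx & Hent & Hset) Hrv'x Hrv' Hcase Hy.
  destruct (entered_leave _ _ m d Hent Hcase) as [Hexit Hleave].
  set (e := deflect m d) in *; set (y := move x e) in *.
  assert (Hyx : y <> x) by apply move_neq.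
  split; [exact Hy|split].
  - rewrite Hrv' by exact Hyx.
    replace (used _ y) with (fun a => dir_eqb a (opp e) || used H y a)
      by (extensionality a; symmetry; apply used_cons_dst).
    apply entered_arrive; [now apply Hset|].
    unfold used; unfold y at 2; rewrite move_opp, edge_used_sym; exact Hexit.
  - intros v Hvy Hvo; destruct (pt_eqb_spec v x) as [->|Hvx].
    + rewrite Hrv'x.
      replace (used _ x) with (fun a => dir_eqb e a || used H x a)
        by (extensionality a; symmetry; apply used_cons_src).
      exact Hleave.
    + rewrite Hrv' by exact Hvx.
      replace (used _ v) with (used H v)
        by (extensionality a; symmetry; now apply used_cons_other).
      now apply Hset.
Qed.

Lemma grw_cands_used H x :
  grw_cands H x = match filter (fun a => negb (used H x a)) all_dirs with
                  | [] => nbrs x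
                  | l => map (move x) l
                  end.
Proof.
  unfold grw_cands; rewrite nbrs_move, filter_map_swap.
  now destruct (filter _ all_dirs).
Qed.

Lemma grw_ret_lazy k : forall H rv x d, coupled H rv x d -> grw_ret k x H = lazy_at k rv x d.
Proof.
  induction k as [|k IH]; intros H rv x d Hc.
  { unfold lazy_at, mirror_avg; simpl; destruct (mirror_at rv x); ring. }
  cbn [grw_ret]; rewrite grw_cands_used; unfold lazy_at.
  set (g := fun y => if pt_eqb y origin then 1 else grw_ret k y ((x, y) :: H)).
  assert (Hexit : forall rv' m, mirror_at rv' x = Some m ->
      (forall v, v <> x -> mirror_at rv' v = mirror_at rv v) ->
      mirror_at rv x = None \/ mirror_at rv x = Some m ->
      g (move x (deflect m d)) = lazy_leave (S k) rv' x (deflect m d)).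
  { intros rv' m Hx Hrv Hcase; unfold g; rewrite lazy_leave_S.
    destruct (pt_eqb_spec (move x (deflect m d)) origin) as [|Hy]; [reflexivity|].
    apply IH, (coupled_step H rv); auto. }
  destruct Hc as (_ & Hent & _).
  destruct (mirror_at rv x) as [m|] eqn:Hm.
  - replace (fun a => negb (used H x a)) with (fun a => dir_eqb a (deflect m d))
      by (extensionality a; now rewrite (entered_Some _ _ _ Hent a), negb_involutive).
    replace (filter _ all_dirs) with [deflect m d] by (destruct m, d; reflexivity).
    rewrite <- Hexit by auto; unfold avg; simpl; field.
  - replace (fun a => negb (used H x a)) with (fun a => negb (dir_eqb a (opp d)))
      by (extensionality a; now rewrite (entered_None _ _ Hent a)).
    assert (Hm' : forall m, g (move x (deflect m d)) = lazy_leave (S k) ((x, m) :: rv) x (deflect m d)).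
    { intros m; apply Hexit; auto; simpl.
      - now rewrite pt_eqb_refl.
      - intros v Hv; now rewrite pt_eqb_neq. }
    pose proof (Hm' NoMirror) as H1; pose proof (Hm' Slash) as H2; pose proof (Hm' Backslash) as H3.
    clearbody g; unfold mirror_avg, avg.
    destruct d; simpl in H1, H2, H3 |- *; rewrite H1, H2, H3; field.
Qed.

Lemma in_zrange n z : (Z.abs z <= Z.of_nat n)%Z -> In z (zrange n).
Proof.
  intros Hz; unfold zrange; apply in_map_iff; exists (Z.to_nat (z + Z.of_nat n)); split.
  - rewrite Z2Nat.id by lia; lia.
  - apply in_seq; lia.
Qed.

Lemma covers_box n : covers (box n) [] origin n.
Proof.
  intros [p q] Hd _; unfold l1_dist, origin in Hd; cbn [fst snd] in Hd.
  apply in_prod; apply in_zrange; lia.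
Qed.

Lemma return_by_eq n : grw_return_by n = mirror_return_by n.
Proof.
  unfold grw_return_by, mirror_return_by; destruct n as [|n].
  { unfold avg; simpl; field. }
  cbn [grw_ret]; change (grw_cands [] origin) with directions.
  unfold directions; rewrite nbrs_move, !map_map; f_equal; apply map_ext; intros a.
  transitivity (lazy_leave (S n) [] origin a).
  - rewrite lazy_leave_S, (pt_eqb_neq _ _ (move_neq origin a)).
    apply grw_ret_lazy, coupled_start.
  - replace (move origin a) with (vec a) by (now destruct a).
    symmetry; apply (mirror_exp_lazy_leave (S n) []), covers_box.
Qed.

Lemma avg_bounds l : Forall (fun r => 0 <= r <= 1) l -> 0 <= avg l <= 1.
Proof.
  intros Hl; unfold avg.
  assert (Hsum : 0 <= fold_right Rplus 0 l <= INR (length l)).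
  { induction Hl; cbn [fold_right length]; [simpl; lra|rewrite S_INR; lra]. }
  destruct (length l) as [|len]; [simpl in *; unfold Rdiv; rewrite Rinv_0; lra|].
  assert (0 < INR (S len)) by apply lt_0_INR, Nat.lt_0_succ.
  unfold Rdiv; split.
  - apply Rmult_le_pos; [lra|left; apply Rinv_0_lt_compat; lra].
  - apply (Rmult_le_reg_r (INR (S len))); [lra|].
    rewrite Rmult_assoc, Rinv_l by lra; lra.
Qed.

Lemma avg_le {A} (f g : A -> R) l : (forall y, f y <= g y) -> avg (map f l) <= avg (map g l).
Proof.
  intros Hfg; unfold avg, Rdiv; rewrite !length_map.
  apply Rmult_le_compat_r.
  - destruct (length l); [simpl; rewrite Rinv_0; lra|].
    apply Rlt_le, Rinv_0_lt_compat, lt_0_INR, Nat.lt_0_succ.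
  - induction l as [|y l IH]; simpl; [lra|]; specialize (Hfg y); lra.
Qed.

Lemma grw_ret_bounds k x H : 0 <= grw_ret k x H <= 1.
Proof.
  revert x H; induction k as [|k IH]; intros x H; simpl; [lra|].
  apply avg_bounds, Forall_forall; intros r Hr.
  apply in_map_iff in Hr as [y [<- _]].
  destruct (pt_eqb y origin); [lra|apply IH].
Qed.

Lemma grw_ret_mono k x H : grw_ret k x H <= grw_ret (S k) x H.
Proof.
  revert x H; induction k as [|k IH]; intros x H; [apply grw_ret_bounds|].
  apply avg_le; intros y; destruct (pt_eqb y origin); [lra|apply IH].
Qed.

Theorem mainTheorem14 :
  exists l : R, Un_cv grw_return_by l /\ Un_cv mirror_return_by l.
Proof.
  assert (Hgrow : Un_growing grw_return_by) by (intros n; apply grw_ret_mono).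
  assert (Hub : has_ub grw_return_by) by (exists 1; intros r [n ->]; apply grw_ret_bounds).
  destruct (growing_cv _ Hgrow Hub) as [l Hl].
  exists l; split; [exact Hl|].
  replace mirror_return_by with grw_return_by by (extensionality n; apply return_by_eq).
  exact Hl.
Qed.
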